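(* Let $d\geq 1$ and let $\mu$ be a probability distribution on $Q_d$ such that $w_i^0>\frac12$ for every $i\in[d]$. If $(A,B)$ with $A,B\in Q_d$ is an equilibrium, then $A=B=\mathbf 0$. Consequently an equilibrium exists if and only if $(\mathbf 0,\mathbf 0)$ is an equilibrium, i.e. if and only if $P_1(X,\mathbf 0)\le \frac12$ for all $X\in Q_d$.
   Context: $Q_d=\{0,1\}^d$ with the Hamming distance $d(X,Y)=|\{i: x_i\neq y_i\}|$. A probability distribution on $Q_d$ is a function $\mu:Q_d\to\mathbb R_{\ge0}$ with $\sum_{V\in Q_d}\mu(V)=1$, extended to subsets by $\mu(\mathcal A)=\sum_{V\in\mathcal A}\mu(V)$. For $A,B\in Q_d$ let $V(A,B)=\{X\in Q_d: d(X,A)<d(X,B)\}$ and $T(A,B)=\{X\in Q_d: d(X,A)=d(X,B)\}$. The payoffs in position $(A,B)$ (Player 1 at $A$, Player 2 at $B$) are $P_1(A,B)=\mu(V(A,B))+\frac12\mu(T(A,B))$ and $P_2(A,B)=\mu(V(B,A))+\frac12\mu(T(A,B))$. The pair $(A,B)$ is an equilibrium if $P_1(A,B)\ge P_1(A',B)$ for all $A'\in Q_d$ and $P_2(A,B)\ge P_2(A,B')$ for all $B'\in Q_d$. For $i\in[d]$, $w_i^0=\mu(\{X\in Q_d: x_i=0\})$. $\mathbf 0=(0,\dots,0)$. *)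

From mathcomp Require Import all_boot all_order all_algebra.
Set Implicit Arguments. Unset Strict Implicit. Unset Printing Implicit Defensive.
Import Order.TTheory GRing.Theory Num.Theory.
Local Open Scope ring_scope.

(* The hypercube Q_d = {0,1}^d, a point is a function 'I_d -> bool (false = 0, true = 1). *)
Definition cube (d : nat) := {ffun 'I_d -> bool}.

Definition hamming d (X Y : cube d) : nat := #|[set i | X i != Y i]|.

Definition zero_pt d : cube d := [ffun _ => false].

Section Game.
Variables (R : realFieldType) (d : nat) (mu : {ffun cube d -> R}).

Definition is_distribution : Prop :=
  (forall V, 0 <= mu V) /\ \sum_(V : cube d) mu V = 1.

Definition mass (S : {set cube d}) : R := \sum_(V in S) mu V.

Definition Vor (A B : cube d) : {set cube d} :=
  [set X | (hamming X A < hamming X B)%N].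
Definition Tie (A B : cube d) : {set cube d} :=
  [set X | hamming X A == hamming X B].

Definition P1 (A B : cube d) : R := mass (Vor A B) + mass (Tie A B) / 2.
Definition P2 (A B : cube d) : R := mass (Vor B A) + mass (Tie A B) / 2.

Definition equilibrium (A B : cube d) : Prop :=
  (forall A', P1 A' B <= P1 A B) /\ (forall B', P2 A B' <= P2 A B).

Definition w0 (i : 'I_d) : R := mass [set X : cube d | ~~ X i].
End Game.

(* Moving onto the opponent's vertex always earns exactly 1/2, so at an
   equilibrium both payoffs are 1/2 and no deviation earns more than 1/2.
   If the opponent stands at B with B_i = 1, flipping coordinate i of B wins
   precisely the voters with x_i = 0, i.e. mass w_i^0 > 1/2; hence every
   coordinate of both locations is 0.  For the same reason (A, A) is an
   equilibrium iff no X earns more than 1/2 against A. *)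
From mathcomp Require Import all_boot all_order all_algebra.
From mathcomp Require Import lra.
Set Implicit Arguments. Unset Strict Implicit. Unset Printing Implicit Defensive.
Import Order.TTheory GRing.Theory Num.Theory.
Local Open Scope ring_scope.

Definition flip d (B : cube d) (i : 'I_d) : cube d :=
  [ffun j => if j == i then ~~ B i else B j].

Lemma hamming_cardD1 d (X Y : cube d) (i : 'I_d) :
  hamming X Y = ((X i != Y i) + #|[predD1 [set j | X j != Y j] & i]|)%N.
Proof. by rewrite /hamming (cardD1 i) inE. Qed.

Lemma hamming_flip d (X B : cube d) (i : 'I_d) :
  hamming X (flip B i) = ((X i == B i) + #|[predD1 [set j | X j != B j] & i]|)%N.
Proof.
rewrite (hamming_cardD1 _ _ i) /flip ffunE eqxx; congr (_ + _)%N.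
  by case: (X i); case: (B i).
by apply: eq_card => j; rewrite !inE ffunE; case: (j =P i).
Qed.

Section VoronoiGame.
Variables (R : realFieldType) (d : nat) (mu : {ffun cube d -> R}).
Hypothesis mu_distr : is_distribution mu.

Lemma massE (S : {set cube d}) :
  mass mu S = \sum_V (if V \in S then mu V else 0).
Proof. exact: big_mkcond. Qed.

Lemma mass_VorDTie (A B : cube d) :
  mass mu (Vor A B) + mass mu (Vor B A) + mass mu (Tie A B) = 1.
Proof.
have [_ <-] := mu_distr; rewrite !massE -!big_split /=.
apply: eq_bigr => V _; rewrite !inE.
by case: ltngtP; rewrite ?addr0 ?add0r.
Qed.

Lemma TieC (A B : cube d) : Tie A B = Tie B A.
Proof. by apply/setP => X; rewrite !inE eq_sym. Qed.

Lemma P2E (A B : cube d) : P2 mu A B = P1 mu B A.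
Proof. by rewrite /P2 /P1 TieC. Qed.

Lemma P1D_P2 (A B : cube d) : P1 mu A B + P2 mu A B = 1.
Proof. by have := mass_VorDTie A B; rewrite /P1 /P2; lra. Qed.

Lemma P1_diag (A : cube d) : P1 mu A A = 1 / 2.
Proof.
have := mass_VorDTie A A; rewrite /P1.
have -> : Vor A A = set0 by apply/setP => X; rewrite !inE ltnn.
by rewrite /mass big_set0; lra.
Qed.

Lemma equilibrium_P1_le_half (A B A' : cube d) :
  equilibrium mu A B -> P1 mu A' B <= 1 / 2.
Proof.
move=> [dev1 dev2]; have := dev1 A'; have := dev2 A.
by rewrite P2E P1_diag; have := P1D_P2 A B; lra.
Qed.

Lemma equilibrium_P2_le_half (A B B' : cube d) :
  equilibrium mu A B -> P2 mu A B' <= 1 / 2.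
Proof.
move=> [dev1 dev2]; have := dev2 B'; have := dev1 B.
by rewrite P1_diag; have := P1D_P2 A B; lra.
Qed.

Lemma equilibrium_diagP (A : cube d) :
  equilibrium mu A A <-> forall X, P1 mu X A <= 1 / 2.
Proof.
split=> [eqAA X|le_half]; first exact: equilibrium_P1_le_half eqAA.
by split=> X; rewrite ?P2E P1_diag.
Qed.


(* [flip B i] and [B] differ in one coordinate only, so they never tie. *)
Lemma P1_flip (B : cube d) i :
  P1 mu (flip B i) B = mass mu [set X : cube d | X i != B i].
Proof.
rewrite /P1.
have -> : Vor (flip B i) B = [set X : cube d | X i != B i].
  apply/setP => X; rewrite !inE hamming_flip (hamming_cardD1 X B i) ltn_add2r.
  by case: (X i); case: (B i).
have -> : Tie (flip B i) B = set0.
  apply/setP => X; rewrite !inE hamming_flip (hamming_cardD1 X B i) eqn_add2r.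
  by case: (X i); case: (B i).
by rewrite /mass big_set0 mul0r addr0.
Qed.

Lemma P1_flip_true (B : cube d) i : B i -> P1 mu (flip B i) B = w0 mu i.
Proof.
move=> Bi; rewrite P1_flip /w0; congr mass.
by apply/setP => X; rewrite !inE Bi; case: (X i).
Qed.

Lemma best_response_half_zero (B : cube d) :
  (forall i, 1 / 2 < w0 mu i) -> (forall A, P1 mu A B <= 1 / 2) ->
  B = zero_pt d.
Proof.
move=> w0_gt le_half; apply/ffunP => i; rewrite ffunE.
apply/negbTE/negP => Bi.
by have := le_half (flip B i); rewrite P1_flip_true //; have := w0_gt i; lra.
Qed.

Lemma equilibrium_zero (A B : cube d) :
  (forall i, 1 / 2 < w0 mu i) -> equilibrium mu A B -> A = zero_pt d /\ B = zero_pt d.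
Proof.
move=> w0_gt eqAB; split; apply: best_response_half_zero => // X.
- by rewrite -P2E; exact: equilibrium_P2_le_half eqAB.
- exact: equilibrium_P1_le_half eqAB.
Qed.

End VoronoiGame.

Theorem mainTheorem1 (R : realFieldType) (d : nat) (mu : {ffun cube d -> R}) :
  (1 <= d)%N ->
  is_distribution mu ->
  (forall i : 'I_d, 1 / 2 < w0 mu i) ->
  (forall A B : cube d, equilibrium mu A B -> A = zero_pt d /\ B = zero_pt d) /\
  ((exists A B : cube d, equilibrium mu A B) <-> equilibrium mu (zero_pt d) (zero_pt d)) /\
  (equilibrium mu (zero_pt d) (zero_pt d) <->
     forall X : cube d, P1 mu X (zero_pt d) <= 1 / 2).
Proof.
move=> _ mu_distr w0_gt.
have eq_zero := @equilibrium_zero R d mu mu_distr _ _ w0_gt.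
split; first exact: eq_zero.
split; last exact: equilibrium_diagP.
split=> [[A [B eqAB]]|eq00]; last by exists (zero_pt d), (zero_pt d).
by have [eA eB] := eq_zero A B eqAB; rewrite eA eB in eqAB.
Qed.
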